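(* Let $X$ be a set and $\sqsubseteq$ a binary relation on pairs of finite subsets of $X$ satisfying: ($\iota_0$) $\emptyset\not\sqsubseteq\emptyset$; ($\iota_1$) $a\sqsubseteq b$, $a\subseteq a'$, $b\subseteq b'$ imply $a'\sqsubseteq b'$; ($\iota_2$) $\{p\}\sqsubseteq\{q\}$ and $\{q\}\sqsubseteq\{p\}$ hold iff $p=q$; ($\iota_3$) $(a_0\cup\{p\})\sqsubseteq b_0$ and $a_1\sqsubseteq(b_1\cup\{p\})$ imply $(a_0\cup a_1)\sqsubseteq(b_0\cup b_1)$. Regard $\mathbf{X}=(X,\sqsubseteq)$ as a structure in the language $\{I_{n,m}\}_{n,m\in\mathbb N}$ by letting $I_{n,m}(s_0,\dots,s_{n-1},t_0,\dots,t_{m-1})$ hold iff $\{s_0,\dots,s_{n-1}\}\sqsubseteq\{t_0,\dots,t_{m-1}\}$. Then $\mathbf{X}$ is $\mathbf{I}$-separated.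
   Context: $\mathbf{I}$ is the structure with universe $\{0,1\}$ and, for all $n,m\in\mathbb N$ (including $0$), an $(n+m)$-ary relation $I_{n,m}$ given by $I_{n,m}(a_0,\dots,a_{n-1},b_0,\dots,b_{m-1})\iff \min_{i<n}a_i\le\max_{j<m}b_j$, with $\min\emptyset=1$, $\max\emptyset=0$. A structure is $\mathbf{I}$-separated if it embeds (injective homomorphism preserving and reflecting all relations) into some power of $\mathbf{I}$. *)

From Stdlib Require Import List.
Import ListNotations.

Definition finite_subset {X : Type} (A : X -> Prop) : Prop :=
  exists l : list X, forall x, A x <-> In x l.

Definition subset {X : Type} (A B : X -> Prop) : Prop := forall x, A x -> B x.
Definition emptyset {X : Type} : X -> Prop := fun _ => False.
Definition singleton {X : Type} (p : X) : X -> Prop := fun x => x = p.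
Definition union {X : Type} (A B : X -> Prop) : X -> Prop := fun x => A x \/ B x.

Definition set_of_list {X : Type} (s : list X) : X -> Prop := fun x => In x s.

Definition iota_axioms {X : Type} (R : (X -> Prop) -> (X -> Prop) -> Prop) : Prop :=
  ~ R emptyset emptyset /\
  (forall a b a' b', finite_subset a -> finite_subset b ->
     finite_subset a' -> finite_subset b' ->
     R a b -> subset a a' -> subset b b' -> R a' b') /\
  (forall p q : X, (R (singleton p) (singleton q) /\ R (singleton q) (singleton p)) <-> p = q) /\
  (forall a0 b0 a1 b1 (p : X), finite_subset a0 -> finite_subset b0 ->
     finite_subset a1 -> finite_subset b1 ->
     R (union a0 (singleton p)) b0 -> R a1 (union b1 (singleton p)) ->
     R (union a0 a1) (union b0 b1)).

(* The relation I_{n,m} of the structure I on {0,1} = bool: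
   min_i a_i <= max_j b_j, with min [] = 1, max [] = 0;
   i.e. (all a_i = 1) -> (some b_j = 1).  Tuples of length n, m are lists. *)
Definition I_rel (a b : list bool) : Prop :=
  (forall x, In x a -> x = true) -> exists y, In y b /\ y = true.

Definition X_rel {X : Type} (R : (X -> Prop) -> (X -> Prop) -> Prop) (s t : list X) : Prop :=
  R (set_of_list s) (set_of_list t).

(* X embeds into the power I^K: f injective, and for every n, m and tuples
   s, t, I_{n,m}^X(s,t) iff I_{n,m} holds in every coordinate k of I^K. *)
Definition I_separated {X : Type} (rel : list X -> list X -> Prop) : Prop :=
  exists (K : Type) (f : X -> K -> bool),
    (forall x y, (forall k, f x k = f y k) -> x = y) /\
    (forall s t : list X,
       rel s t <-> forall k : K, I_rel (map (fun x => f x k) s) (map (fun y => f y k) t)).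

(* A homomorphism X -> I is the indicator function of a set P of points such that
   [a ⊑ b] and [a ⊆ P] force [b] to meet [P].  If [s ⋢ t], the signed set
   "positive on s, negative on t" is consistent, i.e. no finite part of it is
   refuted by ⊑; by Tukey's lemma it extends to a maximal consistent signed set.
   Maximality together with the cut rule (ι3) gives every point a sign, and
   (ι2) forbids a point carrying both signs, so the positive part is a
   homomorphism separating s from t.  Mapping X into the power of I indexed by all
   homomorphisms is then an embedding. *)
From Stdlib Require Import List Classical ClassicalEpsilon.
From mathcomp Require classical_sets.
Import ListNotations.

Section Tukey.

Variables (T : Type) (C : list T -> Prop).

Definition finitely_consistent (S : T -> Prop) : Prop :=
  forall l, (forall y, In y l -> S y) -> C l.

Lemma finitely_consistent_sub (S S' : T -> Prop) :
  finitely_consistent S -> (forall y, S' y -> S y) -> finitely_consistent S'.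
Proof. intros HS sub l Hl. apply HS. intros y Hy. exact (sub y (Hl y Hy)). Qed.

Lemma chain_list_bound (F : (T -> Prop) -> Prop) (B : T -> Prop) :
  classical_sets.total_on F classical_sets.subset ->
  forall l, (forall y, In y l -> (exists2 A, F A & A y) \/ B y) ->
  (forall y, In y l -> B y) \/ exists2 A, F A & forall y, In y l -> A y \/ B y.
Proof.
  intros chain l. induction l as [|z l IH]; intros Hl.
  { left. intros y []. }
  assert (Hl' : forall y, In y l -> (exists2 A, F A & A y) \/ B y)
    by (intros y Hy; apply Hl; now right).
  destruct (IH Hl') as [HB | [A FA HA]];
    destruct (Hl z (or_introl eq_refl)) as [[A' FA' A'z] | Bz].
  - right. exists A'; [exact FA'|]. intros y [<- | Hy]; [now left | right; auto].
  - left. intros y [<- | Hy]; auto.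
  - right. destruct (chain A A' FA FA') as [sub | sub].
    + exists A'; [exact FA'|]. intros y [<- | Hy]; [now left|].
      destruct (HA y Hy); [left; apply sub|right]; assumption.
    + exists A; [exact FA|]. intros y [<- | Hy]; [left; apply sub; exact A'z | auto].
  - right. exists A; [exact FA|]. intros y [<- | Hy]; [now right | auto].
Qed.

(* Tukey's lemma, from Zorn's lemma applied to the sets [A] with [A ∪ S0] consistent;
   the shift by [S0] makes the empty chain harmless. *)
Lemma tukey (S0 : T -> Prop) :
  finitely_consistent S0 ->
  exists M : T -> Prop, (forall y, S0 y -> M y) /\ finitely_consistent M /\
    forall y, finitely_consistent (fun z => M z \/ z = y) -> M y.
Proof.
  intros C0.
  destruct (@classical_sets.Zorn_bigcup T
    (fun A => finitely_consistent (fun y => A y \/ S0 y))) as [A [CA maxA]].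
  - intros F FC chain l Hl.
    destruct (chain_list_bound F S0 chain l Hl) as [HB | [A FA HA]].
    + exact (C0 l HB).
    + exact (FC A FA l HA).
  - exists (fun y => A y \/ S0 y). split; [now right|]. split; [exact CA|].
    intros y Cy. apply NNPP. intros notM.
    apply (maxA (fun z => A z \/ z = y)).
    + split; [intros z Az; now left|].
      intros sub. apply notM. left. apply sub. now right.
    + apply (finitely_consistent_sub _ _ Cy). intros z [[Az | ->] | S0z]; auto.
Qed.

End Tukey.

Arguments finitely_consistent {T} C S.

Definition indicator {T : Type} (P : T -> Prop) (x : T) : bool :=
  if excluded_middle_informative (P x) then true else false.

Lemma indicator_true {T : Type} (P : T -> Prop) (x : T) : indicator P x = true <-> P x.
Proof.
  unfold indicator. destruct (excluded_middle_informative (P x)); split; try tauto.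
  discriminate.
Qed.

Lemma finite_set_of_list {X : Type} (l : list X) : finite_subset (set_of_list l).
Proof. exists l. unfold set_of_list. tauto. Qed.

Lemma finite_singleton {X : Type} (x : X) : finite_subset (singleton x).
Proof. exists [x]. unfold singleton. simpl. intuition. Qed.

Lemma finite_union {X : Type} (A B : X -> Prop) :
  finite_subset A -> finite_subset B -> finite_subset (union A B).
Proof.
  intros [la HA] [lb HB]. exists (la ++ lb). intros x.
  unfold union. rewrite in_app_iff, HA, HB. tauto.
Qed.

Definition side {X : Type} (b : bool) (l : list (bool * X)) : list X :=
  map snd (filter (fun y => Bool.eqb (fst y) b) l).

Definition signed {X : Type} (s t : list X) : list (bool * X) :=
  map (pair true) s ++ map (pair false) t.

Lemma In_side {X : Type} (b : bool) (l : list (bool * X)) (x : X) :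
  In x (side b l) <-> In (b, x) l.
Proof.
  unfold side. rewrite in_map_iff. split.
  - intros [[c y] [<- Hy]]. apply filter_In in Hy as [Hy Hc].
    simpl in Hc. apply Bool.eqb_prop in Hc. now subst.
  - intros Hx. exists (b, x). split; [reflexivity|].
    apply filter_In. split; [exact Hx | apply Bool.eqb_reflx].
Qed.

Lemma side_incl {X : Type} (b : bool) (l l' : list (bool * X)) :
  incl l l' -> incl (side b l) (side b l').
Proof. intros sub x Hx. apply In_side. apply sub. now apply In_side. Qed.

Lemma side_app {X : Type} (b : bool) (l l' : list (bool * X)) :
  side b (l ++ l') = side b l ++ side b l'.
Proof. unfold side. now rewrite filter_app, map_app. Qed.

Lemma side_pair {X : Type} (b : bool) (s : list X) : side b (map (pair b) s) = s.
Proof.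
  induction s as [|x s IH]; [reflexivity|].
  unfold side in *. destruct b; simpl; f_equal; exact IH.
Qed.

Lemma side_pair_negb {X : Type} (b : bool) (s : list X) :
  side (negb b) (map (pair b) s) = [].
Proof. induction s as [|x s IH]; [|destruct b]; easy. Qed.

Lemma side_signed {X : Type} (s t : list X) :
  side true (signed s t) = s /\ side false (signed s t) = t.
Proof.
  unfold signed. rewrite !side_app, !side_pair.
  rewrite (side_pair_negb true), (side_pair_negb false).
  split; [apply app_nil_r | reflexivity].
Qed.

Section Separation.

Variables (X : Type) (R : (X -> Prop) -> (X -> Prop) -> Prop).
Hypothesis HR : iota_axioms R.

Lemma X_rel_incl (s t s' t' : list X) :
  X_rel R s t -> incl s s' -> incl t t' -> X_rel R s' t'.
Proof.
  destruct HR as (_ & mono & _). intros Hst ss' tt'.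
  exact (mono _ _ _ _ (finite_set_of_list s) (finite_set_of_list t)
    (finite_set_of_list s') (finite_set_of_list t') Hst ss' tt').
Qed.

Lemma X_rel_singleton (p q : X) : X_rel R [p] [q] <-> R (singleton p) (singleton q).
Proof.
  destruct HR as (_ & mono & _).
  assert (same : forall x : X, finite_subset (set_of_list [x]) /\
     subset (set_of_list [x]) (singleton x) /\ subset (singleton x) (set_of_list [x])).
  { intros x. split; [apply finite_set_of_list|]. unfold subset, singleton, set_of_list.
    simpl. intuition. }
  destruct (same p) as (fp & p1 & p2), (same q) as (fq & q1 & q2).
  split; intros H.
  - exact (mono _ _ _ _ fp fq (finite_singleton p) (finite_singleton q) H p1 q1).
  - exact (mono _ _ _ _ (finite_singleton p) (finite_singleton q) fp fq H p2 q2).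
Qed.

Lemma X_rel_refl (x : X) : X_rel R [x] [x].
Proof. apply X_rel_singleton. destruct HR as (_ & _ & refl & _). now apply refl. Qed.

Lemma X_rel_cut (x : X) (a0 b0 a1 b1 : list X) :
  X_rel R (x :: a0) b0 -> X_rel R a1 (x :: b1) -> X_rel R (a0 ++ a1) (b0 ++ b1).
Proof.
  destruct HR as (_ & mono & _ & cut). intros H0 H1.
  assert (cons_union : forall l, finite_subset (union (set_of_list l) (singleton x)) /\
      subset (set_of_list (x :: l)) (union (set_of_list l) (singleton x))).
  { intros l. split; [apply finite_union; [apply finite_set_of_list | apply finite_singleton]|].
    unfold subset, union, set_of_list, singleton. simpl. intuition. }
  pose proof (@finite_set_of_list X) as fin.
  destruct (cons_union a0) as [fa0 sa0], (cons_union b1) as [fb1 sb1].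
  assert (U0 : R (union (set_of_list a0) (singleton x)) (set_of_list b0))
    by exact (mono _ _ _ _ (fin _) (fin _) fa0 (fin _) H0 sa0 (fun _ h => h)).
  assert (U1 : R (set_of_list a1) (union (set_of_list b1) (singleton x)))
    by exact (mono _ _ _ _ (fin _) (fin _) (fin _) fb1 H1 (fun _ h => h) sb1).
  assert (app_union : forall l l' : list X, subset (union (set_of_list l) (set_of_list l'))
                                          (set_of_list (l ++ l'))).
  { intros l l' z. unfold union, set_of_list. rewrite in_app_iff. tauto. }
  exact (mono _ _ _ _ (finite_union _ _ (fin a0) (fin a1))
    (finite_union _ _ (fin b0) (fin b1)) (fin _) (fin _)
    (cut _ _ _ _ x (fin a0) (fin b0) (fin a1) (fin b1) U0 U1)
    (app_union a0 a1) (app_union b0 b1)).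
Qed.

Definition refutes (l : list (bool * X)) : Prop := X_rel R (side true l) (side false l).

Definition consistent : (bool * X -> Prop) -> Prop :=
  finitely_consistent (fun l => ~ refutes l).

Lemma refutes_incl (l l' : list (bool * X)) : incl l l' -> refutes l -> refutes l'.
Proof. intros sub H. exact (X_rel_incl _ _ _ _ H (side_incl _ _ _ sub) (side_incl _ _ _ sub)). Qed.

Lemma refutes_extension (M : bool * X -> Prop) (y : bool * X) :
  ~ consistent (fun z => M z \/ z = y) ->
  exists m, (forall z, In z m -> M z) /\ refutes (y :: m).
Proof.
  intros notC. apply NNPP. intros none. apply notC. intros l Hl Hrl.
  pose (eq_dec := fun a b : bool * X => excluded_middle_informative (a = b)).
  apply none. exists (remove eq_dec y l). split.
  - intros z Hz. apply in_remove in Hz as [Hz ne]. now destruct (Hl z Hz).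
  - apply (refutes_incl l); [|exact Hrl]. intros z Hz.
    destruct (excluded_middle_informative (z = y)) as [-> | ne]; [now left|].
    right. now apply in_in_remove.
Qed.

Definition is_hom (g : X -> bool) : Prop :=
  forall s t, X_rel R s t -> I_rel (map g s) (map g t).

Definition positive_part (M : bool * X -> Prop) (x : X) : bool := indicator M (true, x).

Lemma positive_part_true (M : bool * X -> Prop) (x : X) :
  positive_part M x = true <-> M (true, x).
Proof. apply indicator_true. Qed.

Section MaximalConsistent.

Variable M : bool * X -> Prop.
Hypothesis consistent_M : consistent M.
Hypothesis maximal_M : forall y, consistent (fun z => M z \/ z = y) -> M y.

Lemma maximal_sign (x : X) : M (true, x) \/ M (false, x).
Proof.
  apply NNPP. intros none.
  destruct (refutes_extension M (true, x)) as [m1 [Hm1 R1]];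
    [intros C1; apply none; left; exact (maximal_M _ C1)|].
  destruct (refutes_extension M (false, x)) as [m2 [Hm2 R2]];
    [intros C2; apply none; right; exact (maximal_M _ C2)|].
  apply (consistent_M (m1 ++ m2)).
  - intros z Hz. apply in_app_or in Hz as [Hz | Hz]; auto.
  - unfold refutes. rewrite !side_app. exact (X_rel_cut x _ _ _ _ R1 R2).
Qed.

Lemma consistent_sign_unique (x : X) : M (true, x) -> M (false, x) -> False.
Proof.
  intros Mt Mf. apply (consistent_M [(true, x); (false, x)]).
  - intros z [<- | [<- | []]]; assumption.
  - apply X_rel_refl.
Qed.

Lemma positive_part_hom : is_hom (positive_part M).
Proof.
  intros s t Hst Hs. apply NNPP. intros Ht. apply (consistent_M (signed s t)).
  - unfold signed. intros [b x] Hbx. apply in_app_or in Hbx as [Hbx | Hbx];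
      apply in_map_iff in Hbx as [y [Eyx Hy]]; injection Eyx as <- <-.
    + apply positive_part_true, Hs, in_map, Hy.
    + destruct (maximal_sign y) as [My | My]; [|exact My]. exfalso. apply Ht.
      exists (positive_part M y). split; [apply in_map, Hy | now apply positive_part_true].
  - unfold refutes. destruct (side_signed s t) as [-> ->]. exact Hst.
Qed.

End MaximalConsistent.

Lemma separating_hom (s t : list X) :
  ~ X_rel R s t -> exists g, is_hom g /\
    (forall x, In x s -> g x = true) /\ (forall x, In x t -> g x = false).
Proof.
  intros nst.
  destruct (tukey _ (fun l => ~ refutes l) (set_of_list (signed s t))) as (M & S0M & CM & maxM).
  { intros l Hl Hrl. apply nst. pose proof (refutes_incl _ _ Hl Hrl) as H.
    unfold refutes in H. destruct (side_signed s t) as [-> ->] in H. exact H. }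
  assert (Ms : forall b x, In (b, x) (signed s t) -> M (b, x)) by (intros; now apply S0M).
  exists (positive_part M). split; [|split].
  - exact (positive_part_hom M CM maxM).
  - intros x Hx. apply positive_part_true, Ms, in_or_app.
    left. exact (in_map (pair true) s x Hx).
  - intros x Hx. destruct (positive_part M x) eqn:E; [exfalso|reflexivity].
    apply positive_part_true in E.
    apply (consistent_sign_unique M CM x E), Ms, in_or_app.
    right. exact (in_map (pair false) t x Hx).
Qed.

Lemma hom_separates_points (p q : X) : p <> q -> exists g, is_hom g /\ g p <> g q.
Proof.
  intros ne.
  assert (not_both : ~ (X_rel R [p] [q] /\ X_rel R [q] [p])).
  { rewrite !X_rel_singleton. destruct HR as (_ & _ & refl & _). now rewrite refl. }
  apply not_and_or in not_both as [npq | nqp].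
  - destruct (separating_hom [p] [q] npq) as [g [hg [gp gq]]].
    exists g. split; [exact hg|].
    rewrite (gp p (or_introl eq_refl)), (gq q (or_introl eq_refl)). discriminate.
  - destruct (separating_hom [q] [p] nqp) as [g [hg [gq gp]]].
    exists g. split; [exact hg|].
    rewrite (gp p (or_introl eq_refl)), (gq q (or_introl eq_refl)). discriminate.
Qed.

End Separation.

Lemma not_I_rel_separated {X : Type} (g : X -> bool) (s t : list X) :
  (forall x, In x s -> g x = true) -> (forall x, In x t -> g x = false) ->
  ~ I_rel (map g s) (map g t).
Proof.
  intros gs gt H. destruct H as [y [Hy ey]].
  - intros b Hb. apply in_map_iff in Hb as [x [<- Hx]]. exact (gs x Hx).
  - apply in_map_iff in Hy as [x [<- Hx]]. rewrite (gt x Hx) in ey. discriminate.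
Qed.

Theorem mainTheorem7 (X : Type) (R : (X -> Prop) -> (X -> Prop) -> Prop) :
  iota_axioms R -> I_separated (X_rel R).
Proof.
  intros HR.
  exists {g : X -> bool | is_hom X R g}, (fun x g => proj1_sig g x). split.
  - intros p q Hpq. apply NNPP. intros ne.
    destruct (hom_separates_points X R HR p q ne) as [g [hg gpq]].
    exact (gpq (Hpq (exist _ g hg))).
  - intros s t. split.
    + intros Hst [g hg]. exact (hg s t Hst).
    + intros H. apply NNPP. intros nst.
      destruct (separating_hom X R HR s t nst) as [g [hg [gs gt]]].
      exact (not_I_rel_separated g s t gs gt (H (exist _ g hg))).
Qed.
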